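(* Let $F$ be a random forest and $L$ a bi-stable labelling of its explanation BAG $\mathcal{B}_F$, and let $S_L=S_{1,j_1}\times\dots\times S_{k,j_k}$ where, for each feature $X_i$, $A_{X_i\in S_{i,j_i}}$ is the feature argument of $X_i$ labelled $\mathrm{in}$ by $L$. Then for every tree $T\in F$ and every rule $r\in T$, $L(A_{T,r})=\mathrm{in}$ if and only if $r$ is the active rule in $T$ for all inputs $x\in S_L$. Furthermore, all rule arguments $A_{T,r'}$ of $T$ other than the one labelled $\mathrm{in}$ are labelled $\mathrm{out}$.
   Context: Features $X_1,\dots,X_k$ have domains $D_1,\dots,D_k$; each feature is categorical (finite domain) or numerical ($D_i\subseteq\mathbb{R}$). Inputs are $x\in D_1\times\dots\times D_k$; $\mathcal{C}$ is a finite set of class labels. Feature conditions are $X_i=v$ (categorical) or $X_i\le v$ (numerical); a feature literal is a condition or its negation. A rule $r$ is $\mathrm{prem}(r)\rightarrow\mathrm{conc}(r)$ with $\mathrm{prem}(r)$ a finite set of feature literals and $\mathrm{conc}(r)\in\mathcal{C}$. A decision tree $T$ is a finite set of rules such that every input satisfies the premise of exactly one rule of $T$, the active rule in $T$ for $x$. A random forest $F$ is a finite set of decision trees. Domain partition: for a categorical feature, the singletons $\{v\}$, $v\in D_i$; for a numerical feature with distinct thresholds $v_1<\dots<v_m$ occurring in conditions $X_i\le v$ in $F$, the sets $D_i\cap(-\infty,v_1]$, $D_i\cap(v_{j-1},v_j]$ ($2\le j\le m$), $D_i\cap(v_m,\infty)$; denote them $S_{i,1},\dots,S_{i,n_i}$.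 A BAG is $(\mathcal{A},\mathrm{Att},\mathrm{Sup})$ with $\mathcal{A}$ finite and $\mathrm{Att},\mathrm{Sup}\subseteq\mathcal{A}\times\mathcal{A}$; $\mathrm{Att}(A)=\{B:(B,A)\in\mathrm{Att}\}$, $\mathrm{Sup}(A)=\{B:(B,A)\in\mathrm{Sup}\}$. A labelling is a map $L:\mathcal{A}\to\{\mathrm{in},\mathrm{out},\mathrm{und}\}$. The attackers of $A$ dominate its supporters if $|\{B\in\mathrm{Att}(A):L(B)=\mathrm{in}\}|>|\{B\in\mathrm{Sup}(A):L(B)\ne\mathrm{out}\}|$; the supporters dominate the attackers if $|\{B\in\mathrm{Sup}(A):L(B)=\mathrm{in}\}|>|\{B\in\mathrm{Att}(A):L(B)\ne\mathrm{out}\}|$. $L$ is bi-complete if for every $A$: $L(A)=\mathrm{in}$ iff ($L(B)=\mathrm{out}$ for all $B\in\mathrm{Att}(A)$ or $A$'s supporters dominate its attackers), and $L(A)=\mathrm{out}$ iff $A$'s attackers dominate its supporters. $L$ is bi-stable if it is bi-complete and labels nothing $\mathrm{und}$ (a bi-stable labelling of $\mathcal{B}_F$ labels exactly one feature argument of each feature $\mathrm{in}$). The explanation BAG $\mathcal{B}_F$ has arguments: a class argument $A_y$ for each $y\in\mathcal{C}$; a rule argument $A_{T,r}$ for each $T\in F$, $r\in T$ (the rule arguments of $T$); a feature argument $A_{X_i\in S_{i,j}}$ for each feature $i$ and partition set $S_{i,j}$. Attacks: between any two distinct feature arguments of the same feature; from $A_{X_i\in S_{i,j}}$ to $A_{T,r}$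 whenever some literal in $\mathrm{prem}(r)$ is satisfied by no value in $S_{i,j}$; from $A_{T,r}$ to $A_y$ whenever $\mathrm{conc}(r)\ne y$. Supports: from $A_{T,r}$ to $A_y$ whenever $\mathrm{conc}(r)=y$. No other attacks or supports. *)

From HB Require Import structures.
From mathcomp Require Import all_boot all_order all_algebra.
From mathcomp Require Import boolp reals.
From Stdlib Require List.
Set Implicit Arguments. Unset Strict Implicit. Unset Printing Implicit Defensive.
Import Order.TTheory GRing.Theory Num.Theory.
Local Open Scope ring_scope.

Inductive label := lin | lout | lund.
Definition is_in (l : label) : bool := if l is lin then true else false.
Definition is_out (l : label) : bool := if l is lout then true else false.

Section RF.
(* k features X_0..X_{k-1}; categorical values live in CV, numerical in R. *)
Variables (k : nat) (CV : eqType) (R : realType) (Cl : finType).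
(* numeric i = true iff feature i is numerical;
   Dc i = the (finite) domain of a categorical feature i;
   Dn i = the domain (subset of R) of a numerical feature i. *)
Variables (numeric : 'I_k -> bool) (Dc : 'I_k -> seq CV) (Dn : 'I_k -> R -> Prop).

Definition Val := (CV + R)%type.

Definition Dom (i : 'I_k) (w : Val) : Prop :=
  if numeric i then exists r, w = inr r /\ Dn i r
  else exists v, w = inl v /\ v \in Dc i.

Definition input (x : 'I_k -> Val) : Prop := forall i, Dom i (x i).

(* feature conditions: inl (i, v) is "X_i = v", inr (i, v) is "X_i <= v" *)
Definition cond := (('I_k * CV) + ('I_k * R))%type.
(* feature literal: (c, true) is c, (c, false) is the negation of c *)
Definition literal := (cond * bool)%type.
Definition rule := (seq literal * Cl)%type.
Definition prem (r : rule) : seq literal := r.1.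
Definition conc (r : rule) : Cl := r.2.
Definition tree := seq rule.
Definition forest := seq tree.

Definition cond_feat (c : cond) : 'I_k :=
  match c with inl (i, _) => i | inr (i, _) => i end.
Definition lit_feat (l : literal) : 'I_k := cond_feat l.1.

Definition wt_cond (c : cond) : bool :=
  match c with inl (i, _) => ~~ numeric i | inr (i, _) => numeric i end.

Definition cond_sat_val (c : cond) (w : Val) : Prop :=
  match c with
  | inl (_, v) => w = inl v
  | inr (_, v) => exists r, w = inr r /\ r <= v
  end.
Definition lit_sat_val (l : literal) (w : Val) : Prop :=
  if l.2 then cond_sat_val l.1 w else ~ cond_sat_val l.1 w.

Definition lit_sat (l : literal) (x : 'I_k -> Val) : Prop :=
  lit_sat_val l (x (lit_feat l)).
Definition prem_sat (r : rule) (x : 'I_k -> Val) : Prop :=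
  forall l, l \in prem r -> lit_sat l x.

Definition is_tree (T : tree) : Prop :=
  uniq T /\ forall x, input x -> exists! r, r \in T /\ prem_sat r x.

Definition active (T : tree) (x : 'I_k -> Val) (r : rule) : Prop :=
  r \in T /\ prem_sat r x.

Definition is_forest (F : forest) : Prop :=
  uniq F /\ (forall T, T \in F -> is_tree T) /\
  (forall T r l, T \in F -> r \in T -> l \in prem r -> wt_cond l.1).

Section Partition.
Variable F : forest.

Definition lits : seq literal := flatten [seq flatten [seq prem r | r <- T] | T <- F].

Definition thresholds (i : 'I_k) : seq R :=
  sort <=%R (undup (pmap (fun l : literal =>
    match l.1 with inr (i', v) => if i' == i then Some v else None
                 | inl _ => None end) lits)).

(* r lies in the j-th interval (-oo,v_1], (v_1,v_2], ..., (v_m,+oo) *)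
Definition in_interval (th : seq R) (j : nat) (r : R) : bool :=
  (if j == 0%N then true else nth 0 th j.-1 < r) &&
  (if j == size th then true else r <= nth 0 th j).

(* The domain partition S_{i,0}, ..., S_{i,n_i - 1} of feature i (indices
   start at 0).  Being a partition, only the nonempty blocks are kept. *)
Definition parts (i : 'I_k) : seq (Val -> Prop) :=
  if numeric i then
    [seq P <- [seq (fun w : Val => exists r, w = inr r /\ Dn i r /\
                       in_interval (thresholds i) jj r)
              | jj <- iota 0 (size (thresholds i)).+1]
     | `[< exists w, P w >]]
  else [seq (fun w : Val => w = inl v) | v <- undup (Dc i)].

Definition npart (i : 'I_k) : nat := size (parts i).
Definition S (i : 'I_k) (j : nat) : Val -> Prop := nth (fun _ => False) (parts i) j.

Inductive arg :=
  | AClass of Cl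
  | ARule of tree & rule
  | AFeat of 'I_k & nat.

Definition args : seq arg :=
  [seq AClass y | y <- enum Cl] ++
  flatten [seq [seq ARule T r | r <- T] | T <- F] ++
  flatten [seq [seq AFeat i j | j <- iota 0 (npart i)] | i <- enum 'I_k].

Definition att (B A : arg) : Prop :=
  match B, A with
  | AFeat i j, AFeat i' j' => i = i' /\ j <> j'
  | AFeat i j, ARule T r =>
      exists l, l \in prem r /\ lit_feat l = i /\
                forall w, S i j w -> ~ lit_sat_val l w
  | ARule T r, AClass y => conc r <> y
  | _, _ => False
  end.

Definition sup (B A : arg) : Prop :=
  match B, A with
  | ARule T r, AClass y => conc r = y
  | _, _ => False
  end.

Section Labelling.
Variable L : arg -> label.

Definition att_in A := count (fun B => `[< att B A >] && is_in (L B)) args.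
Definition att_notout A := count (fun B => `[< att B A >] && ~~ is_out (L B)) args.
Definition sup_in A := count (fun B => `[< sup B A >] && is_in (L B)) args.
Definition sup_notout A := count (fun B => `[< sup B A >] && ~~ is_out (L B)) args.

Definition att_dominate A : Prop := (sup_notout A < att_in A)%N.
Definition sup_dominate A : Prop := (att_notout A < sup_in A)%N.

Definition bi_complete : Prop :=
  forall A, List.In A args ->
    (L A = lin <-> ((forall B, List.In B args -> att B A -> L B = lout)
                    \/ sup_dominate A)) /\
    (L A = lout <-> att_dominate A).

Definition bi_stable : Prop :=
  bi_complete /\ forall A, List.In A args -> L A <> lund.

End Labelling.
End Partition.
End RF.

Arguments AClass {k CV R Cl}.
Arguments ARule {k CV R Cl}.
Arguments AFeat {k CV R Cl}.

From Pilot Require Import Defs.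
From HB Require Import structures.
From mathcomp Require Import all_boot all_order all_algebra.
From mathcomp Require Import boolp reals.
From Stdlib Require List.
Set Implicit Arguments. Unset Strict Implicit. Unset Printing Implicit Defensive.
Import Order.TTheory.
Local Open Scope ring_scope.

(* Bi-stability makes the labelling two-valued, so a feature argument is [in]
   exactly when no other argument of its feature is, and a rule argument (which
   has no supporters) is [in] exactly when no [in] feature argument attacks it,
   i.e. when every literal of its premise is satisfiable on the selected block
   S_{i,j_i}.  Every literal of F is constant on every block of the domain
   partition, so this says that the rule fires on the whole box S_L.  The box is
   a nonempty set of inputs, hence exactly one rule of each tree fires on it;
   every other rule argument is not [in], hence [out]. *)

Lemma map_ListE (A B : Type) (f : A -> B) (s : seq A) : map f s = List.map f s.
Proof. by elim: s => //= x s ->. Qed.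

Lemma cat_ListE (A : Type) (s1 s2 : seq A) : s1 ++ s2 = List.app s1 s2.
Proof. by elim: s1 => //= x s ->. Qed.

Lemma flatten_map_ListE (A B : Type) (f : A -> seq B) (s : seq A) :
  flatten (map f s) = List.flat_map f s.
Proof. by elim: s => //= x s <-; rewrite cat_ListE. Qed.

Lemma filter_ListE (A : Type) (p : pred A) (s : seq A) : filter p s = List.filter p s.
Proof. by elim: s => //= x s ->. Qed.

Lemma nth_ListE (A : Type) (d : A) (s : seq A) n : nth d s n = List.nth n s d.
Proof. by elim: s n => [|x s IH] [|n] //=. Qed.

Lemma size_ListE (A : Type) (s : seq A) : size s = length s.
Proof. by elim: s => //= x s ->. Qed.

Lemma has_ListE (A : Type) (p : pred A) (s : seq A) : has p s = List.existsb p s.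
Proof. by elim: s => //= x s ->. Qed.

Lemma In_mem (T : eqType) (x : T) (s : seq T) : List.In x s <-> x \in s.
Proof.
elim: s => [|y s IH] //=; rewrite in_cons; split.
- by case=> [->|/IH ->]; rewrite ?eqxx ?orbT.
- by case/orP=> [/eqP->|/IH]; [left|right].
Qed.

Lemma In_nth (A : Type) (d : A) (s : seq A) n : (n < size s)%N -> List.In (nth d s n) s.
Proof. by rewrite nth_ListE size_ListE => /ssrnat.ltP; apply: List.nth_In. Qed.

Lemma in_interval_le_nth (R : realType) (th : seq R) n r p :
  sorted <=%R th -> (n <= size th)%N -> (p < size th)%N ->
  in_interval th n r -> (r <= nth 0 th p) = (n <= p)%N.
Proof.
move=> th_sorted n_le p_lt /andP[r_gt r_le].
have nth_le := sorted_leq_nth (@le_trans _ R) (@lexx _ R) 0 th_sorted.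
have [n_le_p|p_lt_n] := leqP n p.
- have n_lt : (n < size th)%N := leq_ltn_trans n_le_p p_lt.
  rewrite ltn_eqF // in r_le.
  by apply: le_trans r_le _; apply: nth_le; rewrite ?inE.
- have n_gt0 : (0 < n)%N := leq_ltn_trans (leq0n p) p_lt_n.
  rewrite gtn_eqF // in r_gt.
  apply/negbTE; rewrite -ltNge; apply: le_lt_trans r_gt.
  have p_le : (p <= n.-1)%N by rewrite -ltnS prednK.
  by apply: nth_le; rewrite ?inE // prednK // (leq_trans p_lt_n).
Qed.

Section ExplanationBAG.
Variables (k : nat) (CV : eqType) (R : realType) (Cl : finType).
Variables (numeric : 'I_k -> bool) (Dc : 'I_k -> seq CV) (Dn : 'I_k -> R -> Prop).
Variable F : forest k CV R Cl.

Local Notation args := (Defs.args numeric Dc Dn F).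
Local Notation npart := (Defs.npart numeric Dc Dn F).
Local Notation S := (Defs.S numeric Dc Dn F).
Local Notation th := (Defs.thresholds F).
Local Notation att := (Defs.att numeric Dc Dn F).
Local Notation sup := (@Defs.sup k CV R Cl).

Lemma In_args_feat i n : (n < npart i)%N -> List.In (AFeat i n) args.
Proof.
move=> n_lt; rewrite /Defs.args !cat_ListE !List.in_app_iff !flatten_map_ListE.
right; right; apply/List.in_flat_map; exists i.
split; first by apply/In_mem; rewrite mem_enum.
rewrite map_ListE; apply/List.in_map_iff; exists n.
by split=> //; apply/In_mem; rewrite mem_iota.
Qed.

Lemma In_args_rule T r : T \in F -> r \in T -> List.In (ARule T r) args.
Proof.
move=> T_in r_in; rewrite /Defs.args !cat_ListE !List.in_app_iff !flatten_map_ListE.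
right; left; apply/List.in_flat_map; exists T; split; first exact/In_mem.
by rewrite map_ListE; apply/List.in_map_iff; exists r; split => //; apply/In_mem.
Qed.

Lemma mem_lits T r l : T \in F -> r \in T -> l \in prem r -> l \in lits F.
Proof.
by move=> T_in r_in l_in; apply/flatten_mapP; exists T => //; apply/flatten_mapP; exists r.
Qed.

Lemma mem_thresholds i v b : (inr (i, v), b) \in lits F -> v \in th i.
Proof.
move=> l_in; rewrite /Defs.thresholds mem_sort mem_undup mem_pmap.
by apply/mapP; exists (inr (i, v), b) => //=; rewrite eqxx.
Qed.

Lemma S_shape i n : (n < npart i)%N ->
  if numeric i then
    (exists w, S i n w) /\ exists2 m, (m <= size (th i))%N &
      S i n = (fun w => exists r, w = inr r /\ Dn i r /\ in_interval (th i) m r)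
  else exists2 v, v \in Dc i & S i n = (fun w => w = inl v).
Proof.
move=> /(In_nth (fun _ => False)); rewrite -/(S i n) /Defs.parts.
case: (numeric i); rewrite ?filter_ListE map_ListE.
- case/List.filter_In => /List.in_map_iff[m [<- /In_mem m_in]] /asboolP S_ne.
  by move: m_in; rewrite mem_iota ltnS => /andP[_ m_le]; split=> //; exists m.
- case/List.in_map_iff => v [<- /In_mem]; rewrite mem_undup.
  by exists v.
Qed.

Lemma S_nonempty i n : (n < npart i)%N -> exists w, S i n w.
Proof.
move/S_shape; case: (numeric i) => [[] //|[v _ ->]].
by exists (inl v).
Qed.

Lemma S_sub_Dom i n w : (n < npart i)%N -> S i n w -> Dom numeric Dc Dn i w.
Proof.
move/S_shape; rewrite /Dom; case: (numeric i) => [[_ [m _ ->]]|[v v_in ->]].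
- by case=> r [-> [r_in _]]; exists r.
- by move=> ->; exists v.
Qed.

Lemma lit_sat_val_S_const i n l w1 w2 : (n < npart i)%N -> l \in lits F ->
  wt_cond numeric l.1 -> lit_feat l = i ->
  S i n w1 -> S i n w2 -> lit_sat_val l w1 -> lit_sat_val l w2.
Proof.
move=> /S_shape S_i; case: l => c b /= l_in wt_c c_feat w1_in w2_in.
suff sat_eq : cond_sat_val c w1 <-> cond_sat_val c w2.
  by rewrite /lit_sat_val /=; case: (b) => /=; rewrite sat_eq.
move: l_in wt_c c_feat; case: c => [[i' v]|[i' v]] l_in /= wt_c;
  rewrite /lit_feat /= => feat_eq; subst i.
- move: S_i; rewrite (negPf wt_c) => -[v0 _ S_def].
  by rewrite S_def in w1_in w2_in; rewrite w1_in w2_in.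
- move: S_i; rewrite wt_c => -[_ [m m_le S_def]].
  have v_in := mem_thresholds l_in.
  have th_sorted : sorted <=%R (th i') by apply: sort_sorted; exact: le_total.
  (* v is a threshold of feature i', so the whole block lies on one side of it. *)
  have threshold_sat w :
      S i' n w -> cond_sat_val (inr (i', v)) w <-> (m <= index v (th i'))%N.
    rewrite S_def => -[r [-> [_ r_in]]] /=.
    rewrite -(in_interval_le_nth th_sorted m_le _ r_in) ?index_mem // nth_index //.
    by split=> [[r' [[->]]]|r_le]; last exists r.
  exact: iff_trans (threshold_sat _ w1_in) (iff_sym (threshold_sat _ w2_in)).
Qed.

Variable L : arg k CV R Cl -> label.
Hypothesis HL : bi_stable numeric Dc Dn F L.

Lemma bi_stable_lout A : List.In A args -> L A <> lin -> L A = lout.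
Proof. by move=> A_in; have := HL.2 A A_in; case: (L A). Qed.

Lemma unsupported_counts A : (forall B, ~ sup B A) ->
  sup_in numeric Dc Dn F L A = 0%N /\ sup_notout numeric Dc Dn F L A = 0%N.
Proof.
move=> no_sup; split; rewrite -(count_pred0 args); apply: eq_count => B /=;
  by case: asboolP => // /no_sup.
Qed.

Lemma unsupported_lin A : List.In A args -> (forall B, ~ sup B A) ->
  L A = lin <-> forall B, List.In B args -> att B A -> L B = lout.
Proof.
move=> A_in no_sup; rewrite (HL.1 A A_in).1 /Defs.sup_dominate.
by rewrite (unsupported_counts no_sup).1 ltn0; split=> [[]|] //; left.
Qed.

Lemma lout_of_lin_attacker A B : List.In A args -> (forall C, ~ sup C A) ->
  List.In B args -> att B A -> L B = lin -> L A = lout.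
Proof.
move=> A_in no_sup B_in BA B_lin; apply/(HL.1 A A_in).2.
rewrite /Defs.att_dominate (unsupported_counts no_sup).2 -has_count has_ListE.
by apply/List.existsb_exists; exists B; rewrite B_lin andbT; split=> //; apply/asboolP.
Qed.

Variable j : 'I_k -> nat.
Hypothesis Hj : forall i, (j i < npart i)%N /\ L (AFeat i (j i)) = lin.

Lemma feat_lin_eq i n : List.In (AFeat i n) args -> L (AFeat i n) = lin -> n = j i.
Proof.
move=> n_in n_lin; apply: contrapT => n_ne.
suff : L (AFeat i n) = lout by rewrite n_lin.
have no_sup : forall C, ~ sup C (AFeat i n) by case=> [?|? ?|? ?] [].
apply: (lout_of_lin_attacker n_in no_sup (In_args_feat (Hj i).1) _ (Hj i).2).
by split=> // /esym.
Qed.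

Lemma rule_lin_sat T r : T \in F -> r \in T ->
  L (ARule T r) = lin <-> forall l, l \in prem r ->
    exists2 w, S (lit_feat l) (j (lit_feat l)) w & lit_sat_val l w.
Proof.
move=> T_in r_in; have no_sup : forall B, ~ sup B (ARule T r) by case=> [?|? ?|? ?] [].
rewrite (unsupported_lin (In_args_rule T_in r_in) no_sup).
split=> [attackers_out l l_in|sat].
- apply: contrapT => unsat.
  suff : L (AFeat (lit_feat l) (j (lit_feat l))) = lout by rewrite (Hj _).2.
  apply: attackers_out; first exact: In_args_feat (Hj _).1.
  by exists l; do 2!split=> //; move=> w w_in w_sat; apply: unsat; exists w.
- move=> [y|T' r'|i n] B_in //= [l [l_in [l_feat unsat]]].
  apply: (bi_stable_lout B_in) => /(feat_lin_eq B_in) n_eq; subst i n.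
  by have [w w_in w_sat] := sat l l_in; exact: unsat w w_in w_sat.
Qed.

Lemma S_L_nonempty : exists x : 'I_k -> Val CV R, forall i, S i (j i) (x i).
Proof. by have [x x_in] := boolp.choice (fun i => S_nonempty (Hj i).1); exists x. Qed.

Hypothesis HF : is_forest numeric Dc Dn F.

Lemma rule_lin_active T r : T \in F -> r \in T ->
  L (ARule T r) = lin <-> forall x, (forall i, S i (j i) (x i)) -> active T x r.
Proof.
move=> T_in r_in; rewrite rule_lin_sat //; split=> [sat x x_in|act l l_in].
- split=> // l l_in; have [w w_in w_sat] := sat l l_in.
  exact: lit_sat_val_S_const (Hj _).1 (mem_lits T_in r_in l_in)
           (HF.2.2 T r l T_in r_in l_in) erefl w_in (x_in _) w_sat.
- have [x x_in] := S_L_nonempty.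
  by exists (x (lit_feat l)) => //; exact: (act x x_in).2 l l_in.
Qed.

End ExplanationBAG.

Theorem lemma2 (k : nat) (CV : eqType) (R : realType) (Cl : finType)
  (numeric : 'I_k -> bool) (Dc : 'I_k -> seq CV) (Dn : 'I_k -> R -> Prop)
  (F : forest k CV R Cl)
  (HF : is_forest numeric Dc Dn F)
  (L : arg k CV R Cl -> label)
  (HL : bi_stable numeric Dc Dn F L)
  (j : 'I_k -> nat)
  (Hj : forall i, (j i < npart numeric Dc Dn F i)%N /\ L (AFeat i (j i)) = lin) :
  let S_L := fun x : 'I_k -> Val CV R => forall i, S numeric Dc Dn F i (j i) (x i) in
  forall T, T \in F ->
    (forall r, r \in T -> (L (ARule T r) = lin <-> forall x, S_L x -> active T x r)) /\
    (exists r, r \in T /\ L (ARule T r) = lin /\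
       forall r', r' \in T -> r' <> r -> L (ARule T r') = lout).
Proof.
move=> S_L T T_in; split=> [r r_in|]; first exact: rule_lin_active.
have [x x_in] := S_L_nonempty Hj.
have x_input : input numeric Dc Dn x := fun i => S_sub_Dom (Hj i).1 (x_in i).
have [r [[r_in r_act] r_unique]] := (HF.2.1 T T_in).2 x x_input.
exists r; split=> //; split.
  apply/(rule_lin_sat HL Hj T_in r_in) => l l_in.
  by exists (x (lit_feat l)); last exact: r_act.
move=> r' r'_in r'_ne.
apply: (bi_stable_lout HL (In_args_rule numeric Dc Dn T_in r'_in)) => r'_lin.
by apply/r'_ne/esym/r_unique; apply: (rule_lin_active HL Hj HF T_in r'_in).1.
Qed.
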